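(* Let ${\mathcal R}$ be a similarity relation, $\mu$ a cut value, and $t,s$ higher-order patterns. If $\mathsf{HOPSU}$, started on $\{t\simeq^?_{{\mathcal R},\mu}s\};\varepsilon;1$, stops with a configuration $\emptyset;\sigma;\mathfrak{d}$, then $\mathfrak{d}\ge\mu$ and ${\mathcal R}(t\sigma,s\sigma)=\mathfrak{d}$, i.e. $\sigma$ is an $({\mathcal R},\mu)$-unifier of $t$ and $s$ with degree $\mathfrak{d}$.
   Context: Terms: simply typed $\lambda$-terms over disjoint countably infinite sets $\mathcal{V}$ (typed variables) and $\mathcal{F}$ (typed constants), types $\tau::=\delta\mid\tau\to\tau$. Terms are identified modulo $\alpha$, kept $\beta$-normal, and $\eta$-expanded except that arguments of free variables are kept $\eta$-normal (i.e. are bound variables); a term is written $\lambda x_1,\dots,x_n.h(t_1,\dots,t_m)$ with head $h$. Free variables are written $F,G,H,X,Y,\dots$, bound variables $x,y,z,\dots$. A higher-order pattern is a term where every free variable occurrence is applied to a list of pairwise distinct bound variables; all terms in problems and substitutions are higher-order patterns. Substitutions $\sigma$ are type-preserving maps with finite domain $\mathit{Dom}(\sigma)=\{X\mid X\sigma\neq X\}$, applied postfix ($t\sigma$, capture-avoiding, followed by $\beta$-normalization); $\sigma\vartheta$ means first $\sigma$ then $\vartheta$; $\varepsilon$ is the identity; $\varphi|_V$ is the restriction to $V$; $\mathtt{fv}(t)$ is the set of free variables. Fuzzy setting: T-norm $\wedge=\min$. ${\mathcal R}_A$ is a similarity relation (reflexive, symmetric, min-transitive map to $[0,1]$) on $\mathcal{F}\cup\mathcal{V}$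 with ${\mathcal R}_A(x,y)=0$ for distinct variables, ${\mathcal R}_A(f,g)=0$ for constants of different types, ${\mathcal R}_A(x,f)=0$ for a variable and a constant. It induces ${\mathcal R}$ on terms: on normal forms ${\mathcal R}(a,b)={\mathcal R}_A(a,b)$ for symbols, ${\mathcal R}((t_1\,s_1),(t_2\,s_2))={\mathcal R}(t_1,t_2)\wedge{\mathcal R}(s_1,s_2)$, ${\mathcal R}(\lambda x.t,\lambda y.s)={\mathcal R}(t\{x\mapsto z\},s\{y\mapsto z\})$ for fresh $z$ of the same type, $0$ otherwise. A cut value is $\mu\in(0,1]$. An equation is written $t\simeq^?_{{\mathcal R},\mu}s$; a unification problem is a finite set of equations. A substitution $\sigma$ is an $({\mathcal R},\mu)$-unifier of $\{t_1\simeq^?_{{\mathcal R},\mu}s_1,\dots,t_n\simeq^?_{{\mathcal R},\mu}s_n\}$ with degree $\mathfrak{d}$ if ${\mathcal R}(t_1\sigma,s_1\sigma)\wedge\dots\wedge{\mathcal R}(t_n\sigma,s_n\sigma)=\mathfrak{d}\ge\mu$. Algorithm $\mathsf{HOPSU}$: it works on configurations $P;\sigma;\mathfrak{d}$ ($P$ a problem, $\sigma$ a substitution, $\mathfrak{d}\ge\mu$ a degree) or $\bot$, applying the following rules to a selected equation as long as possible ($\uplus$ is disjoint union): (Abs) $\{\lambda x.t\simeq^?\lambda x.s\}\uplus P;\sigma;\mathfrak{d}\leadsto\{t\simeq^?s\}\cup P;\sigma;\mathfrak{d}$. (Dec) $\{f(t_1,\dots,t_n)\simeq^?g(s_1,\dots,s_n)\}\uplus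 P;\sigma;\mathfrak{d}\leadsto\{t_1\simeq^?s_1,\dots,t_n\simeq^?s_n\}\cup P;\sigma;\mathfrak{d}\wedge{\mathcal R}(f,g)$, where $f,g$ are rigid heads, $n\ge0$, and $\mathfrak{d}\wedge{\mathcal R}(f,g)\ge\mu$. (SV) $\{F(x_1,\dots,x_n)\simeq^?F(y_1,\dots,y_n)\}\uplus P;\sigma;\mathfrak{d}\leadsto P\vartheta;\sigma\vartheta;\mathfrak{d}$, where $\{z_1,\dots,z_m\}=\{x_i\mid x_i=y_i\}$ and $\vartheta=\{F\mapsto\lambda x_1,\dots,x_n.H(z_1,\dots,z_m)\}$ with $H$ fresh. (Ori) $\{a(s_1,\dots,s_m)\simeq^?F(x_1,\dots,x_n)\}\uplus P;\sigma;\mathfrak{d}\leadsto\{F(x_1,\dots,x_n)\simeq^?a(s_1,\dots,s_m)\}\cup P;\sigma;\mathfrak{d}$, where $F$ is free and $a$ is a constant or $a\in\{x_1,\dots,x_n\}$. (LF) $\{F(x_1,\dots,x_n)\simeq^?a(s_1,\dots,s_m)\}\uplus P;\sigma;\mathfrak{d}\leadsto P\vartheta;\sigma\vartheta;\mathfrak{d}$, where $F\notin\mathtt{fv}(a(s_1,\dots,s_m))$, $a$ is a constant, a free variable, or in $\{x_1,\dots,x_n\}$, $\mathsf{VarElim}(F(x_1,\dots,x_n),a(s_1,\dots,s_m))=\varphi$, and $\vartheta=\varphi|_V$ with $V=\{F\}\cup\mathtt{fv}(a(s_1,\dots,s_m))$. (Fail) $\{t\simeq^?s\}\uplus P;\sigma;\mathfrak{d}\leadsto\bot$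 if no other rule applies to the selected equation. $\mathsf{VarElim}(t,s)$ starts from $\{t\simeq^?s\};\varepsilon$ and applies as long as possible: (VE1) $\{F(x_1,\dots,x_n)\simeq^?a(s_1,\dots,s_m)\}\uplus P;\sigma\leadsto\{H_1(x_1,\dots,x_n)\simeq^?s_1,\dots,H_m(x_1,\dots,x_n)\simeq^?s_m\}\cup P;\sigma\vartheta$, where $a$ is a constant or in $\{x_1,\dots,x_n\}$, $\vartheta=\{F\mapsto\lambda x_1,\dots,x_n.a(H_1(x_1,\dots,x_n),\dots,H_m(x_1,\dots,x_n))\}$ with $H_i$ fresh of appropriate types; (VE2) $\{F(x_1,\dots,x_n)\simeq^?G(y_1,\dots,y_m)\}\uplus P;\sigma\leadsto P\vartheta;\sigma\vartheta$, where $\{x_1,\dots,x_n\}\cap\{y_1,\dots,y_m\}=\{z_1,\dots,z_k\}$ and $\vartheta=\{F\mapsto\lambda x_1,\dots,x_n.H(z_1,\dots,z_k),G\mapsto\lambda y_1,\dots,y_m.H(z_1,\dots,z_k)\}$ with $H$ fresh. If it ends in $\emptyset;\varphi$, then $\mathsf{VarElim}(t,s)=\varphi$. *)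

From Stdlib Require Import Reals List Arith Bool.
Import ListNotations.

Inductive ty : Type := Base (d : nat) | Arr (a b : ty).

Definition ty_eq_dec : forall a b : ty, {a = b} + {a <> b}.
Proof. decide equality; apply Nat.eq_dec. Defined.

Fixpoint ty_args (t : ty) : list ty :=
  match t with Base _ => [] | Arr a b => a :: ty_args b end.
Fixpoint ty_res (t : ty) : nat :=
  match t with Base d => d | Arr _ b => ty_res b end.
Definition arrows (l : list ty) (r : ty) : ty := fold_right Arr r l.

Inductive fvar : Type := FV (name : nat) (fty : ty).
Definition fv_ty (X : fvar) : ty := match X with FV _ t => t end.
Definition fvar_eq_dec : forall a b : fvar, {a = b} + {a <> b}.
Proof. decide equality; [apply ty_eq_dec | apply Nat.eq_dec]. Defined.

Inductive const : Type := CN (name : nat) (cty : ty).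
Definition c_ty (c : const) : ty := match c with CN _ t => t end.

(* ---------- terms (beta-normal, eta-long, locally nameless/de Bruijn) ----------
   Lam a t        : lambda x:a. t     (bound variables are de Bruijn indices)
   Rig h [t1..tm] : h(t1,..,tm) with rigid head h (bound variable or constant)
   Flex F [y1..yn]: F(y1,..,yn), free variable F applied to (eta-normal)
                    bound variables y_i (de Bruijn indices).              *)
Inductive rhead : Type := Bv (i : nat) | Cn (c : const).
Inductive tm : Type :=
| Lam (a : ty) (t : tm)
| Rig (h : rhead) (ts : list tm)
| Flex (F : fvar) (xs : list nat).

Definition lams (l : list ty) (b : tm) : tm := fold_right Lam b l.

(* Well-typed higher-order pattern in eta-long beta-normal form, in a
   context Gamma of bound-variable types (head of list = index 0). *)
Inductive wt (G : list ty) : tm -> ty -> Prop :=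
| wt_lam : forall a t b, wt (a :: G) t b -> wt G (Lam a t) (Arr a b)
| wt_con : forall c ts,
    Forall2 (wt G) ts (ty_args (c_ty c)) ->
    wt G (Rig (Cn c) ts) (Base (ty_res (c_ty c)))
| wt_bv : forall i T ts,
    nth_error G i = Some T ->
    Forall2 (wt G) ts (ty_args T) ->
    wt G (Rig (Bv i) ts) (Base (ty_res T))
| wt_flex : forall F ys,
    NoDup ys ->
    Forall2 (fun y a => nth_error G y = Some a) ys (ty_args (fv_ty F)) ->
    wt G (Flex F ys) (Base (ty_res (fv_ty F))).

Definition hopattern (t : tm) (T : ty) : Prop := wt [] t T.

Fixpoint fv (t : tm) : list fvar :=
  match t with
  | Lam _ b => fv b
  | Rig _ ts => flat_map fv ts
  | Flex F _ => [F]
  end.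

Definition up (r : nat -> nat) (k : nat) : nat :=
  match k with 0 => 0 | S k' => S (r k') end.

Fixpoint rename (r : nat -> nat) (t : tm) : tm :=
  match t with
  | Lam a b => Lam a (rename (up r) b)
  | Rig (Bv i) ts => Rig (Bv (r i)) (map (rename r) ts)
  | Rig (Cn c) ts => Rig (Cn c) (map (rename r) ts)
  | Flex F ys => Flex F (map r ys)
  end.

Fixpoint strip (n : nat) (t : tm) : tm :=
  match n, t with
  | S n', Lam _ b => strip n' b
  | _, _ => t
  end.

(* beta-normal form of (lambda x1..xn. u) y1 .. yn, for bound variables y_i:
   a renaming of x_i to y_i (x_i has de Bruijn index n-i in u). *)
Definition inst (u : tm) (ys : list nat) : tm :=
  let n := length ys in
  rename (fun k => if k <? n then nth (n - 1 - k) ys 0 else k - n) (strip n u).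

(* substitutions: every free variable is mapped to a closed term of its
   type (in eta-long form); the identity maps X to its eta-expansion *)
Definition subst := fvar -> tm.

(* eta-long form of H(x1,..,xn) for bound variables xs (current context):
   lambda z1..zk. H(xs, z1..zk) *)
Definition long_app (H : fvar) (xs : list nat) : tm :=
  let zs := skipn (length xs) (ty_args (fv_ty H)) in
  let k := length zs in
  lams zs (Flex H (map (fun x => x + k) xs ++ rev (seq 0 k))).

Definition eta (X : fvar) : tm := long_app X [].

Definition eps : subst := fun X => eta X.

(* t sigma  (capture-avoiding application followed by beta-normalization;
   on patterns beta-normalization reduces to renaming) *)
Fixpoint app_sub (s : subst) (t : tm) : tm :=
  match t with
  | Lam a b => Lam a (app_sub s b)
  | Rig h ts => Rig h (map (app_sub s) ts)
  | Flex F ys => inst (s F) ys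
  end.

(* composition: sigma theta = first sigma, then theta *)
Definition comp (s th : subst) : subst := fun X => app_sub th (s X).

Definition restrict (s : subst) (V : list fvar) : subst :=
  fun X => if in_dec fvar_eq_dec X V then s X else eta X.

Definition bind1 (F : fvar) (u : tm) : subst :=
  fun X => if fvar_eq_dec X F then u else eta X.

Definition bind2 (F : fvar) (u : tm) (G : fvar) (v : tm) : subst :=
  fun X => if fvar_eq_dec X F then u else if fvar_eq_dec X G then v else eta X.

Definition Dom (s : subst) (X : fvar) : Prop := s X <> eta X.

Open Scope R_scope.

(* R_A restricted to constants; on variables it is forced to be the identity
   (1 on equal variables, 0 on distinct ones, 0 between a variable and a constant). *)
Definition similarity (RA : const -> const -> R) : Prop :=
  (forall c d, 0 <= RA c d <= 1) /\
  (forall c, RA c c = 1) /\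
  (forall c d, RA c d = RA d c) /\
  (forall c d e, Rmin (RA c d) (RA d e) <= RA c e) /\
  (forall c d, c_ty c <> c_ty d -> RA c d = 0).

Definition Rh (RA : const -> const -> R) (f g : rhead) : R :=
  match f, g with
  | Bv i, Bv j => if Nat.eqb i j then 1 else 0
  | Cn c, Cn d => RA c d
  | _, _ => 0
  end.

Fixpoint Rt (RA : const -> const -> R) (t s : tm) {struct t} : R :=
  match t, s with
  | Lam a t', Lam b s' => if ty_eq_dec a b then Rt RA t' s' else 0
  | Rig h ts, Rig g ss =>
      Rmin (Rh RA h g)
        ((fix go (l1 l2 : list tm) : R :=
            match l1, l2 with
            | [], [] => 1
            | t1 :: l1', s1 :: l2' => Rmin (Rt RA t1 s1) (go l1' l2')
            | _, _ => 0
            end) ts ss)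
  | Flex F xs, Flex G ys =>
      if fvar_eq_dec F G then
        (if list_eq_dec Nat.eq_dec xs ys then 1 else 0) else 0
  | _, _ => 0
  end.

Definition unifier_deg (RA : const -> const -> R) (mu : R) (s : subst) (t u : tm) (d : R) : Prop :=
  Rt RA (app_sub s t) (app_sub s u) = d /\ mu <= d.

(* An equation  t =?= s  between terms living under the bound-variable
   context Gamma (introduced by the (Abs) rule). *)
Inductive eqn : Type := Eqn (Gamma : list ty) (l r : tm).

Definition app_eq (s : subst) (e : eqn) : eqn :=
  match e with Eqn G l r => Eqn G (app_sub s l) (app_sub s r) end.

Definition fv_eqn (e : eqn) : list fvar :=
  match e with Eqn _ l r => fv l ++ fv r end.
Definition fv_prob (P : list eqn) : list fvar := flat_map fv_eqn P.

(* Problems are finite sets; represented by duplicate-free lists.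
   same_set P' Q : P' is the set of elements of Q. *)
Definition same_set (P' Q : list eqn) : Prop :=
  NoDup P' /\ (forall e, In e P' <-> In e Q).

Definition fresh (H : fvar) (P : list eqn) (s : subst) : Prop :=
  ~ In H (fv_prob P) /\ s H = eta H /\ (forall X, X <> H -> ~ In H (fv (s X))).

Fixpoint index_of (x : nat) (l : list nat) : nat :=
  match l with
  | [] => 0
  | y :: l' => if Nat.eqb x y then 0 else S (index_of x l')
  end.

Definition common (xs ys : list nat) : list nat :=
  filter (fun x => existsb (Nat.eqb x) ys) xs.

Definition ve2_subst (F : fvar) (xs : list nat) (G : fvar) (ys : list nat) (H : fvar) : subst :=
  let zs := common xs ys in
  bind2 F (lams (ty_args (fv_ty F))
             (Flex H (map (fun z => length xs - 1 - index_of z xs) zs)%nat))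
        G (lams (ty_args (fv_ty G))
             (Flex H (map (fun z => length ys - 1 - index_of z ys) zs)%nat)).

(* Steps of VarElim.  Pout, sout: the surrounding HOPSU configuration, with
   respect to which the fresh variables must also be fresh. *)
Inductive ve_step (Pout : list eqn) (sout : subst) :
    list eqn * subst -> list eqn * subst -> Prop :=
| VE_Abs : forall P1 P2 G a t s phi P',
    same_set P' (Eqn (a :: G) t s :: P1 ++ P2) ->
    ve_step Pout sout (P1 ++ Eqn G (Lam a t) (Lam a s) :: P2, phi) (P', phi)
| VE1 : forall P1 P2 G F xs a ss phi a' Ta Hs P',
    ((exists c, a = Cn c /\ a' = Cn c /\ Ta = c_ty c) \/
     (exists i j, a = Bv i /\ nth_error xs j = Some i /\
                  a' = Bv (length xs - 1 - j)%nat /\ nth_error G i = Some Ta)) ->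
    Forall2 (fun H Ti => fv_ty H = arrows (ty_args (fv_ty F)) Ti) Hs (ty_args Ta) ->
    length Hs = length ss ->
    NoDup Hs ->
    Forall (fun H => fresh H ((P1 ++ Eqn G (Flex F xs) (Rig a ss) :: P2) ++ Pout) phi
                     /\ fresh H [] sout) Hs ->
    same_set P' (map (fun p => Eqn G (long_app (fst p) xs) (snd p)) (combine Hs ss)
                 ++ P1 ++ P2) ->
    ve_step Pout sout
      (P1 ++ Eqn G (Flex F xs) (Rig a ss) :: P2, phi)
      (P', comp phi (bind1 F (lams (ty_args (fv_ty F))
                     (Rig a' (map (fun H => long_app H (rev (seq 0 (length xs)))) Hs)))))
| VE2 : forall P1 P2 G F xs Gv ys phi H P',
    fv_ty H = arrows (map (fun z => nth (index_of z xs) (ty_args (fv_ty F)) (Base 0))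
                          (common xs ys))
                     (Base (ty_res (fv_ty F))) ->
    fresh H ((P1 ++ Eqn G (Flex F xs) (Flex Gv ys) :: P2) ++ Pout) phi ->
    fresh H [] sout ->
    same_set P' (map (app_eq (ve2_subst F xs Gv ys H)) (P1 ++ P2)) ->
    ve_step Pout sout
      (P1 ++ Eqn G (Flex F xs) (Flex Gv ys) :: P2, phi)
      (P', comp phi (ve2_subst F xs Gv ys H)).

Inductive star {A : Type} (st : A -> A -> Prop) : A -> A -> Prop :=
| star_refl : forall x, star st x x
| star_step : forall x y z, st x y -> star st y z -> star st x z.

Definition VarElim (Pout : list eqn) (sout : subst) (G : list ty) (l r : tm) (phi : subst) : Prop :=
  star (ve_step Pout sout) ([Eqn G l r], eps) ([], phi).

Inductive cfg : Type :=
| Cfg (P : list eqn) (s : subst) (d : R)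
| Bot.

Definition agree_pos (xs ys : list nat) : list nat :=
  filter (fun j => Nat.eqb (nth j xs 0%nat) (nth j ys 0%nat)) (seq 0 (length xs)).

Definition sv_subst (F : fvar) (xs ys : list nat) (H : fvar) : subst :=
  bind1 F (lams (ty_args (fv_ty F))
             (Flex H (map (fun j => length xs - 1 - j) (agree_pos xs ys))%nat)).

(* hrule RA mu P1 e P2 s d c' : a rule other than (Fail) transforms the
   configuration (P1 ++ e :: P2); s; d, with selected equation e, into c'. *)
Inductive hrule (RA : const -> const -> R) (mu : R)
    (P1 : list eqn) (e : eqn) (P2 : list eqn) (s : subst) (d : R) : cfg -> Prop :=
| H_Abs : forall G a t u P',
    e = Eqn G (Lam a t) (Lam a u) ->
    same_set P' (Eqn (a :: G) t u :: P1 ++ P2) ->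
    hrule RA mu P1 e P2 s d (Cfg P' s d)
| H_Dec : forall G f g ts ss P',
    e = Eqn G (Rig f ts) (Rig g ss) ->
    length ts = length ss ->
    mu <= Rmin d (Rh RA f g) ->
    same_set P' (map (fun p => Eqn G (fst p) (snd p)) (combine ts ss) ++ P1 ++ P2) ->
    hrule RA mu P1 e P2 s d (Cfg P' s (Rmin d (Rh RA f g)))
| H_SV : forall G F xs ys H P',
    e = Eqn G (Flex F xs) (Flex F ys) ->
    length xs = length ys ->
    fv_ty H = arrows (map (fun j => nth j (ty_args (fv_ty F)) (Base 0)) (agree_pos xs ys))
                     (Base (ty_res (fv_ty F))) ->
    fresh H (P1 ++ e :: P2) s ->
    same_set P' (map (app_eq (sv_subst F xs ys H)) (P1 ++ P2)) ->
    hrule RA mu P1 e P2 s d (Cfg P' (comp s (sv_subst F xs ys H)) d)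
| H_Ori : forall G a ss F xs P',
    e = Eqn G (Rig a ss) (Flex F xs) ->
    ((exists c, a = Cn c) \/ (exists i, a = Bv i /\ In i xs)) ->
    same_set P' (Eqn G (Flex F xs) (Rig a ss) :: P1 ++ P2) ->
    hrule RA mu P1 e P2 s d (Cfg P' s d)
| H_LF : forall G F xs u phi P',
    e = Eqn G (Flex F xs) u ->
    ((exists c ss, u = Rig (Cn c) ss) \/
     (exists i ss, u = Rig (Bv i) ss /\ In i xs) \/
     (exists Gv ys, u = Flex Gv ys)) ->
    ~ In F (fv u) ->
    VarElim (P1 ++ e :: P2) s G (Flex F xs) u phi ->
    same_set P' (map (app_eq (restrict phi (F :: fv u))) (P1 ++ P2)) ->
    hrule RA mu P1 e P2 s d (Cfg P' (comp s (restrict phi (F :: fv u))) d).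

Inductive hstep (RA : const -> const -> R) (mu : R) : cfg -> cfg -> Prop :=
| hstep_rule : forall P1 e P2 s d c',
    hrule RA mu P1 e P2 s d c' ->
    hstep RA mu (Cfg (P1 ++ e :: P2) s d) c'
| hstep_fail : forall P1 e P2 s d,
    (forall c', ~ hrule RA mu P1 e P2 s d c') ->
    hstep RA mu (Cfg (P1 ++ e :: P2) s d) Bot.

Definition hopsu_init (t s : tm) : cfg := Cfg [Eqn [] t s] eps 1.

(* HOPSU keeps the invariant that, for every admissible substitution theta,
     R(t sigma theta, s sigma theta) = min(d, R_theta(P)),
   where P; sigma; d is the current configuration and R_theta(P) is the least
   degree R(l theta, r theta) over the equations l =? r of P.  (Abs), (Ori) and
   (Dec) transform P and d following the definition of the induced similarity;
   (SV) and (LF) compose sigma with a substitution rho that makes the selected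
   equation syntactically equal, so that it contributes degree 1 and the rest
   of the problem becomes P rho.  For (LF) this is the soundness of VarElim:
   every unifier of its current problem, composed after the substitution built
   so far, unifies the original pair.  Since terms are patterns, applying a
   substitution amounts to renaming bound variables, and (t rho) theta = t (rho
   theta) holds because all substitutions involved bind closed, sufficiently
   eta-expanded terms.  At the end P is empty, and theta = eps gives
   R(t sigma, s sigma) = d, while every (Dec) step checks mu <= d. *)

From Pilot Require Import Defs.
From Stdlib Require Import Reals List Lia Arith Lra.
Import ListNotations.

Local Open Scope nat_scope.

Lemma in_select {A : Type} (x e : A) P1 P2 :
  In x (P1 ++ e :: P2) <-> x = e \/ In x (P1 ++ P2).
Proof. rewrite !in_app_iff. simpl. intuition. Qed.

Lemma combine_functional {A B : Type} (l1 : list A) (l2 : list B) x y y' :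
  NoDup l1 -> In (x, y) (combine l1 l2) -> In (x, y') (combine l1 l2) -> y = y'.
Proof.
  revert l2; induction l1 as [|x1 l1 IH]; intros [|y1 l2] Hnd H1 H2; simpl in *; try tauto.
  apply NoDup_cons_iff in Hnd. destruct Hnd as [Hx1 Hnd].
  destruct H1 as [E1|H1], H2 as [E2|H2].
  - congruence.
  - injection E1 as -> ->. apply in_combine_l in H2. contradiction.
  - injection E2 as -> ->. apply in_combine_l in H1. contradiction.
  - eauto.
Qed.

Lemma map_eq_combine {A B C : Type} (f : A -> C) (g : B -> C) l1 l2 :
  length l1 = length l2 -> (forall x y, In (x, y) (combine l1 l2) -> f x = g y) ->
  map f l1 = map g l2.
Proof.
  revert l2; induction l1 as [|x l1 IH]; intros [|y l2] Hl Hfg; simpl in *; try lia; auto.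
  f_equal; auto.
Qed.

Lemma Forall2_Forall_l {A B : Type} (Rel : A -> B -> Prop) (P : A -> Prop) l1 l2 :
  Forall2 Rel l1 l2 -> Forall (fun x => forall y, Rel x y -> P x) l1 -> Forall P l1.
Proof.
  induction 1 as [|x y l1 l2 Hxy _ IH]; intros Hall; constructor; inversion Hall; eauto.
Qed.

Lemma star_invariant {A : Type} (st : A -> A -> Prop) (I : A -> Prop) x y :
  (forall a b, st a b -> I a -> I b) -> star st x y -> I x -> I y.
Proof. intros Hst Hxy. induction Hxy; eauto. Qed.

Lemma ty_args_arrows l T : ty_args (arrows l T) = l ++ ty_args T.
Proof. induction l; simpl; f_equal; auto. Qed.

(** * Patterns and substitutions *)

Section TermInduction.
Variable P : tm -> Prop.
Hypothesis P_lam : forall a t, P t -> P (Lam a t).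
Hypothesis P_rig : forall h ts, Forall P ts -> P (Rig h ts).
Hypothesis P_flex : forall F xs, P (Flex F xs).

Fixpoint tm_nested_ind (t : tm) : P t :=
  match t with
  | Lam a b => P_lam a b (tm_nested_ind b)
  | Rig h ts => P_rig h ts ((fix go (l : list tm) : Forall P l :=
        match l with
        | [] => Forall_nil _
        | u :: l' => Forall_cons u (tm_nested_ind u) (go l')
        end) ts)
  | Flex F xs => P_flex F xs
  end.
End TermInduction.

Definition arity (X : fvar) : nat := length (ty_args (fv_ty X)).

Inductive scoped : nat -> tm -> Prop :=
| scoped_lam k a t : scoped (S k) t -> scoped k (Lam a t)
| scoped_bv k i ts : i < k -> Forall (scoped k) ts -> scoped k (Rig (Bv i) ts)
| scoped_cn k c ts : Forall (scoped k) ts -> scoped k (Rig (Cn c) ts)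
| scoped_flex k F ys : Forall (fun y => y < k) ys -> scoped k (Flex F ys).

Inductive fully_applied : tm -> Prop :=
| fully_applied_lam a t : fully_applied t -> fully_applied (Lam a t)
| fully_applied_rig h ts : Forall fully_applied ts -> fully_applied (Rig h ts)
| fully_applied_flex F ys : length ys = arity F -> fully_applied (Flex F ys).

Fixpoint lam_prefix (t : tm) : nat :=
  match t with Lam _ b => S (lam_prefix b) | _ => 0 end.

Lemma rename_ext t f g : (forall i, f i = g i) -> rename f t = rename g t.
Proof.
  revert f g; induction t as [a u IHu|h ts IHts|F xs] using tm_nested_ind; intros f g Hfg; simpl.
  - f_equal. apply IHu. intros [|i]; simpl; auto.
  - rewrite Forall_forall in IHts.
    destruct h; [rewrite Hfg|]; f_equal; apply map_ext_in; auto.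
  - f_equal. apply map_ext; auto.
Qed.

Lemma rename_rename t f g : rename f (rename g t) = rename (fun i => f (g i)) t.
Proof.
  revert f g; induction t as [a u IHu|h ts IHts|F xs] using tm_nested_ind; intros f g; simpl.
  - f_equal. rewrite IHu. apply rename_ext. intros [|i]; reflexivity.
  - rewrite Forall_forall in IHts.
    destruct h; simpl; f_equal; rewrite map_map; apply map_ext_in; auto.
  - f_equal. apply map_map.
Qed.

Lemma rename_ext_scoped t k f g :
  scoped k t -> (forall i, i < k -> f i = g i) -> rename f t = rename g t.
Proof.
  revert k f g; induction t as [a u IHu|h ts IHts|F xs] using tm_nested_ind; intros k f g Ht Hfg;
    inversion Ht; subst; simpl; rewrite ?Forall_forall in *.
  - f_equal. apply (IHu (S k)); auto. intros [|i] Hi; simpl; auto with arith.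
  - rewrite Hfg by auto. f_equal. apply map_ext_in. eauto.
  - f_equal. apply map_ext_in. eauto.
  - f_equal. apply map_ext_in. auto.
Qed.

Lemma scoped_weaken t k k' : scoped k t -> k <= k' -> scoped k' t.
Proof.
  revert k k'; induction t as [a u IHu|h ts IHts|F xs] using tm_nested_ind; intros k k' Ht Hk;
    inversion Ht; subst; constructor; rewrite ?Forall_forall in *.
  - apply (IHu (S k)); auto with arith.
  - lia.
  - eauto.
  - eauto.
  - intros y Hy. enough (y < k) by lia. auto.
Qed.

Lemma scoped_rename t n k f :
  scoped n t -> (forall i, i < n -> f i < k) -> scoped k (rename f t).
Proof.
  revert n k f; induction t as [a u IHu|h ts IHts|F xs] using tm_nested_ind; intros n k f Ht Hf;
    inversion Ht; subst; simpl; constructor; rewrite ?Forall_forall in *;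
    try (intros u Hu; apply in_map_iff in Hu; destruct Hu as [v [<- Hv]]); eauto.
  apply (IHu (S n)); auto. intros [|i] Hi; simpl; [lia|]. specialize (Hf i). lia.
Qed.

Lemma scoped_strip m t k : scoped k t -> scoped (k + m) (strip m t).
Proof.
  revert t k; induction m as [|m IH]; intros t k Ht; simpl.
  - rewrite Nat.add_0_r. exact Ht.
  - destruct t; try (eapply scoped_weaken; eauto; lia).
    inversion Ht; subst. replace (k + S m) with (S k + m) by lia. auto.
Qed.

Definition inst_ren (xs : list nat) (k : nat) : nat :=
  if k <? length xs then nth (length xs - 1 - k) xs 0 else k - length xs.

Lemma inst_unfold w xs : inst w xs = rename (inst_ren xs) (strip (length xs) w).
Proof. reflexivity. Qed.

Lemma inst_ren_rev_index xs j : j < length xs -> inst_ren xs (length xs - 1 - j) = nth j xs 0.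
Proof.
  intros Hj. unfold inst_ren.
  replace (length xs - 1 - j <? length xs) with true by (symmetry; apply Nat.ltb_lt; lia).
  f_equal. lia.
Qed.

Lemma inst_rename w zs r : scoped 0 w -> rename r (inst w zs) = inst w (map r zs).
Proof.
  intros Hw. rewrite !inst_unfold, length_map, rename_rename.
  apply rename_ext_scoped with (k := length zs); [apply (scoped_strip _ _ 0), Hw|].
  intros i Hi. unfold inst_ren. rewrite length_map.
  replace (i <? length zs) with true by (symmetry; apply Nat.ltb_lt; exact Hi).
  rewrite (nth_indep (map r zs) 0 (r 0)) by (rewrite length_map; lia).
  symmetry. apply map_nth.
Qed.

Lemma app_sub_rename t th r :
  (forall X, scoped 0 (th X)) -> app_sub th (rename r t) = rename r (app_sub th t).
Proof.
  intros Hth; revert r; induction t as [a u IHu|h ts IHts|F xs] using tm_nested_ind; intros r; simpl.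
  - f_equal. auto.
  - rewrite Forall_forall in IHts.
    destruct h; simpl; f_equal; rewrite !map_map; apply map_ext_in; auto.
  - rewrite inst_rename; auto.
Qed.

Lemma app_sub_strip m w th :
  m <= lam_prefix w -> app_sub th (strip m w) = strip m (app_sub th w).
Proof.
  revert w; induction m as [|m IH]; intros w Hm; simpl; auto.
  destruct w; simpl in Hm; try lia. apply IH. lia.
Qed.

(* On patterns beta-normalisation is the renaming done by [inst]; it commutes
   with [th] because [th] binds closed terms and [r] binds terms with enough
   leading lambdas. *)
Lemma app_sub_comp t r th :
  (forall X, scoped 0 (th X)) -> (forall X, arity X <= lam_prefix (r X)) ->
  fully_applied t -> app_sub th (app_sub r t) = app_sub (Defs.comp r th) t.
Proof.
  intros Hth Hr; induction t as [a u IHu|h ts IHts|F xs] using tm_nested_ind; intros Ht; inversion Ht; subst; simpl.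
  - f_equal. auto.
  - rewrite map_map. f_equal. rewrite Forall_forall in *. apply map_ext_in. auto.
  - unfold Defs.comp. rewrite !inst_unfold, app_sub_rename by exact Hth. f_equal.
    apply app_sub_strip. match goal with E : length xs = _ |- _ => rewrite E end. apply Hr.
Qed.

Lemma scoped_app_sub t k th :
  (forall X, scoped 0 (th X)) -> scoped k t -> scoped k (app_sub th t).
Proof.
  intros Hth; revert k; induction t as [a u IHu|h ts IHts|F xs] using tm_nested_ind; intros k Ht;
    inversion Ht; subst; simpl.
  - constructor. auto.
  - constructor; auto. rewrite Forall_forall in *. intros u Hu.
    apply in_map_iff in Hu. destruct Hu as [v [<- Hv]]. auto.
  - constructor. rewrite Forall_forall in *. intros u Hu.
    apply in_map_iff in Hu. destruct Hu as [v [<- Hv]]. auto.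
  - rewrite inst_unfold. apply scoped_rename with (n := 0 + length xs).
    + apply scoped_strip, Hth.
    + intros i Hi. rewrite Forall_forall in *. unfold inst_ren.
      replace (i <? length xs) with true by (symmetry; apply Nat.ltb_lt; exact Hi).
      match goal with E : forall y, In y xs -> _ |- _ => apply E end. apply nth_In. lia.
Qed.

Lemma fully_applied_rename t f : fully_applied t -> fully_applied (rename f t).
Proof.
  revert f; induction t as [a u IHu|h ts IHts|F xs] using tm_nested_ind; intros f Ht; inversion Ht; subst; simpl.
  - constructor. auto.
  - rewrite Forall_forall in *.
    destruct h; constructor; rewrite Forall_forall; intros u Hu;
      apply in_map_iff in Hu; destruct Hu as [v [<- Hv]]; auto.
  - constructor. rewrite length_map. assumption.
Qed.

Lemma fully_applied_strip m t : fully_applied t -> fully_applied (strip m t).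
Proof.
  revert t; induction m as [|m IH]; intros t Ht; simpl; auto.
  destruct t; auto. inversion Ht; subst. auto.
Qed.

Lemma fully_applied_app_sub t th :
  (forall X, fully_applied (th X)) -> fully_applied t -> fully_applied (app_sub th t).
Proof.
  intros Hth; induction t as [a u IHu|h ts IHts|F xs] using tm_nested_ind; intros Ht; inversion Ht; subst; simpl.
  - constructor. auto.
  - constructor. rewrite Forall_forall in *. intros u Hu.
    apply in_map_iff in Hu. destruct Hu as [v [<- Hv]]. auto.
  - apply fully_applied_rename, fully_applied_strip, Hth.
Qed.

Lemma lam_prefix_app_sub w th : lam_prefix w <= lam_prefix (app_sub th w).
Proof. induction w; simpl; lia. Qed.

(* Every substitution built by HOPSU and VarElim binds terms of this shape. *)
Record wf_binding (X : fvar) (u : tm) : Prop := {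
  binding_scoped : scoped 0 u;
  binding_lams : arity X <= lam_prefix u;
  binding_applied : fully_applied u }.

Definition wf_subst (r : subst) : Prop := forall X, wf_binding X (r X).

Lemma wf_subst_comp r th : wf_subst r -> wf_subst th -> wf_subst (Defs.comp r th).
Proof.
  intros Hr Hth X. destruct (Hr X) as [S L A]. unfold Defs.comp. split.
  - apply scoped_app_sub; auto. intros Y. apply Hth.
  - eapply Nat.le_trans; [exact L|apply lam_prefix_app_sub].
  - apply fully_applied_app_sub; auto. intros Y. apply Hth.
Qed.

Fixpoint upn (k : nat) (f : nat -> nat) : nat -> nat :=
  match k with 0 => f | S k' => upn k' (Defs.up f) end.

Lemma upn_spec k f j : upn k f j = if j <? k then j else f (j - k) + k.
Proof.
  revert f j; induction k as [|k IH]; intros f j; simpl.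
  - rewrite Nat.sub_0_r. lia.
  - rewrite IH.
    destruct (Nat.ltb_spec j k), (Nat.ltb_spec j (S k)); try lia.
    + replace (j - k) with 0 by lia. simpl. lia.
    + replace (j - k) with (S (j - S k)) by lia. simpl. lia.
Qed.

Lemma upn_lt k f j : j < k -> upn k f j = j.
Proof. intros Hj. rewrite upn_spec. destruct (Nat.ltb_spec j k); lia. Qed.

Lemma upn_add k f j : upn k f (j + k) = f j + k.
Proof.
  rewrite upn_spec. destruct (Nat.ltb_spec (j + k) k); [lia|].
  now rewrite Nat.add_sub.
Qed.

Lemma rename_lams l b f : rename f (lams l b) = lams l (rename (upn (length l) f) b).
Proof. revert b f; induction l; intros b f; simpl; f_equal; auto. Qed.

Lemma strip_lams l b : strip (length l) (lams l b) = b.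
Proof. induction l; simpl; auto. Qed.

Lemma lam_prefix_lams l b : lam_prefix (lams l b) = length l + lam_prefix b.
Proof. induction l; simpl; auto. Qed.

Lemma scoped_lams l b k : scoped (k + length l) b -> scoped k (lams l b).
Proof.
  revert k; induction l; intros k Hb; simpl in *.
  - rewrite Nat.add_0_r in Hb. exact Hb.
  - constructor. apply IHl. now rewrite Nat.add_succ_comm.
Qed.

Lemma fv_lams l b : fv (lams l b) = fv b.
Proof. induction l; simpl; auto. Qed.

Lemma fully_applied_lams l b : fully_applied b -> fully_applied (lams l b).
Proof. induction l; simpl; auto using fully_applied_lam. Qed.

Lemma wf_binding_lams X l b :
  arity X <= length l -> scoped (length l) b -> fully_applied b -> wf_binding X (lams l b).
Proof.
  intros Hl Hs Ha. split.
  - apply scoped_lams. exact Hs.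
  - rewrite lam_prefix_lams. lia.
  - apply fully_applied_lams. exact Ha.
Qed.

Lemma inst_lams l b xs : length xs = length l -> inst (lams l b) xs = rename (inst_ren xs) b.
Proof. intros Hl. rewrite inst_unfold, Hl, strip_lams. reflexivity. Qed.

Lemma map_inst_ren_rev_seq xs : map (inst_ren xs) (rev (seq 0 (length xs))) = xs.
Proof.
  apply nth_ext with (d := 0) (d' := 0); rewrite ?length_map, ?length_rev, ?length_seq; auto.
  intros j Hj.
  rewrite (nth_indep _ 0 (inst_ren xs 0)) by (rewrite length_map, length_rev, length_seq; exact Hj).
  rewrite map_nth, rev_nth, seq_nth by (rewrite ?length_seq; lia).
  rewrite length_seq. rewrite <- inst_ren_rev_index by exact Hj. f_equal. lia.
Qed.

Lemma eta_unfold X : eta X = lams (ty_args (fv_ty X)) (Flex X (rev (seq 0 (arity X)))).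
Proof. reflexivity. Qed.

Lemma wf_subst_eps : wf_subst eps.
Proof.
  intros X. unfold eps. rewrite eta_unfold. apply wf_binding_lams; auto.
  - constructor. rewrite Forall_forall. intros y Hy. apply in_rev, in_seq in Hy. exact (proj2 Hy).
  - constructor. rewrite length_rev, length_seq. reflexivity.
Qed.

Lemma app_sub_eps t : fully_applied t -> app_sub eps t = t.
Proof.
  induction t as [a u IHu|h ts IHts|F xs] using tm_nested_ind; intros Ht; inversion Ht; subst; simpl.
  - f_equal. auto.
  - f_equal. rewrite Forall_forall in *. rewrite <- map_id. apply map_ext_in. auto.
  - match goal with E : length xs = arity F |- _ => rename E into Hxs end.
    unfold eps. rewrite eta_unfold, inst_lams by exact Hxs. simpl.
    rewrite <- Hxs, map_inst_ren_rev_seq. reflexivity.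
Qed.

Lemma fv_rename t f : fv (rename f t) = fv t.
Proof.
  revert f; induction t as [a u IHu|h ts IHts|F xs] using tm_nested_ind; intros f; simpl; auto.
  rewrite Forall_forall in IHts.
  destruct h; simpl; rewrite !flat_map_concat_map, map_map; f_equal; apply map_ext_in; auto.
Qed.

Lemma fv_strip m t : fv (strip m t) = fv t.
Proof. revert t; induction m; intros t; simpl; auto. destruct t; simpl; auto. Qed.

Lemma fv_inst w ys : fv (inst w ys) = fv w.
Proof. rewrite inst_unfold, fv_rename, fv_strip. reflexivity. Qed.

Lemma app_sub_ext_fv t r1 r2 :
  (forall X, In X (fv t) -> r1 X = r2 X) -> app_sub r1 t = app_sub r2 t.
Proof.
  induction t as [a u IHu|h ts IHts|F xs] using tm_nested_ind; intros Hr; simpl in *.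
  - f_equal. auto.
  - f_equal. rewrite Forall_forall in IHts. apply map_ext_in. intros u Hu.
    apply IHts; auto. intros X HX. apply Hr, in_flat_map. eauto.
  - rewrite Hr; auto.
Qed.

Lemma app_sub_id_on t r :
  fully_applied t -> (forall X, In X (fv t) -> r X = eps X) -> app_sub r t = t.
Proof. intros Ht Hr. rewrite (app_sub_ext_fv t r eps Hr). apply app_sub_eps, Ht. Qed.

Lemma in_fv_app_sub t r X :
  In X (fv (app_sub r t)) -> exists Y, In Y (fv t) /\ In X (fv (r Y)).
Proof.
  induction t as [a u IHu|h ts IHts|F xs] using tm_nested_ind; intros HX; simpl in *.
  - auto.
  - rewrite Forall_forall in IHts. apply in_flat_map in HX.
    destruct HX as [u [Hu HXu]]. apply in_map_iff in Hu. destruct Hu as [v [<- Hv]].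
    destruct (IHts v Hv HXu) as [Y [HY1 HY2]]. exists Y. split; auto.
    apply in_flat_map. eauto.
  - rewrite fv_inst in HX. eauto.
Qed.

Lemma long_app_unfold H zs : long_app H zs =
  lams (skipn (length zs) (ty_args (fv_ty H)))
    (Flex H (map (fun x => x + (arity H - length zs)) zs ++ rev (seq 0 (arity H - length zs)))).
Proof. unfold long_app. rewrite length_skipn. reflexivity. Qed.

Lemma fv_long_app H zs : fv (long_app H zs) = [H].
Proof. rewrite long_app_unfold, fv_lams. reflexivity. Qed.

Lemma fully_applied_long_app H zs : length zs <= arity H -> fully_applied (long_app H zs).
Proof.
  intros Hl. rewrite long_app_unfold. apply fully_applied_lams. constructor.
  rewrite length_app, length_map, length_rev, length_seq. lia.
Qed.

Lemma scoped_long_app H zs k :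
  length zs <= arity H -> Forall (fun z => z < k) zs -> scoped k (long_app H zs).
Proof.
  intros Hl Hz. rewrite long_app_unfold. apply scoped_lams. constructor.
  rewrite length_skipn. fold (arity H). rewrite Forall_forall in *.
  intros y Hy. apply in_app_iff in Hy. destruct Hy as [Hy|Hy].
  - apply in_map_iff in Hy. destruct Hy as [z [<- Hz']]. specialize (Hz z Hz'). lia.
  - apply in_rev, in_seq in Hy. lia.
Qed.

(* [long_app H (rev (seq 0 n))] is [H] applied to the [n] enclosing binders. *)
Lemma rename_long_app H xs : length xs <= arity H ->
  rename (inst_ren xs) (long_app H (rev (seq 0 (length xs)))) = long_app H xs.
Proof.
  intros Hl. rewrite !long_app_unfold, rename_lams, length_rev, length_seq, length_skipn.
  fold (arity H). f_equal. simpl. f_equal. rewrite map_app, map_map. f_equal.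
  - rewrite <- (map_inst_ren_rev_seq xs) at 2. rewrite map_map.
    apply map_ext. intros j. apply upn_add.
  - rewrite <- map_id. apply map_ext_in. intros j Hj.
    apply in_rev, in_seq in Hj. apply upn_lt. lia.
Qed.

Lemma wf_subst_bind1 F u : wf_binding F u -> wf_subst (bind1 F u).
Proof.
  intros Hu X. unfold bind1. destruct (fvar_eq_dec X F) as [->|_]; [exact Hu|apply wf_subst_eps].
Qed.

Lemma bind1_other F u X : X <> F -> bind1 F u X = eps X.
Proof. intros HX. unfold bind1. destruct (fvar_eq_dec X F); [contradiction|reflexivity]. Qed.

Lemma bind1_self F u : bind1 F u F = u.
Proof. unfold bind1. destruct (fvar_eq_dec F F); [reflexivity|contradiction]. Qed.

Lemma wf_subst_bind2 F u G v : wf_binding F u -> wf_binding G v -> wf_subst (bind2 F u G v).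
Proof.
  intros Hu Hv X. unfold bind2.
  destruct (fvar_eq_dec X F) as [->|_]; [exact Hu|].
  destruct (fvar_eq_dec X G) as [->|_]; [exact Hv|apply wf_subst_eps].
Qed.

Lemma bind2_fst F u G v : bind2 F u G v F = u.
Proof. unfold bind2. destruct (fvar_eq_dec F F); [reflexivity|contradiction]. Qed.

Lemma bind2_snd F u G v : F <> G -> bind2 F u G v G = v.
Proof.
  intros HFG. unfold bind2.
  destruct (fvar_eq_dec G F); [congruence|]. destruct (fvar_eq_dec G G); [reflexivity|contradiction].
Qed.

Lemma bind2_other F u G v X : X <> F -> X <> G -> bind2 F u G v X = eps X.
Proof.
  intros HF HG. unfold bind2.
  destruct (fvar_eq_dec X F); [contradiction|]. destruct (fvar_eq_dec X G); [contradiction|reflexivity].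
Qed.

Lemma wf_subst_restrict r V : wf_subst r -> wf_subst (restrict r V).
Proof. intros Hr X. unfold restrict. destruct in_dec; [apply Hr|apply wf_subst_eps]. Qed.

Lemma app_sub_restrict t r V : incl (fv t) V -> app_sub (restrict r V) t = app_sub r t.
Proof.
  intros HV. apply app_sub_ext_fv. intros X HX. unfold restrict.
  destruct in_dec as [_|HX']; [reflexivity|exfalso; exact (HX' (HV X HX))].
Qed.

Lemma app_sub_comp_wf t r th : wf_subst r -> wf_subst th -> fully_applied t ->
  app_sub th (app_sub r t) = app_sub (Defs.comp r th) t.
Proof. intros Hr Hth. apply app_sub_comp; intros X; [apply Hth|apply Hr]. Qed.

Lemma app_sub_comp_assoc t phi rho th :
  wf_subst phi -> wf_subst rho -> wf_subst th -> fully_applied t ->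
  app_sub th (app_sub (Defs.comp phi rho) t) = app_sub (Defs.comp rho th) (app_sub phi t).
Proof.
  intros Hphi Hrho Hth Ht.
  assert (Hphit : fully_applied (app_sub phi t))
    by (apply fully_applied_app_sub; auto; intros X; apply Hphi).
  rewrite <- (app_sub_comp_wf t phi rho), app_sub_comp_wf; auto.
Qed.

Definition fully_applied_eqn (e : eqn) : Prop :=
  match e with Eqn _ l r => fully_applied l /\ fully_applied r end.

Definition unifies (th : subst) (e : eqn) : Prop :=
  match e with Eqn _ l r => app_sub th l = app_sub th r end.

Definition unifies_all (th : subst) (P : list eqn) : Prop := forall e, In e P -> unifies th e.

Lemma fully_applied_app_eq r e : wf_subst r -> fully_applied_eqn e -> fully_applied_eqn (app_eq r e).
Proof.
  intros Hr. destruct e as [G l u]. intros [Hl Hu].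
  split; apply fully_applied_app_sub; auto; intros X; apply Hr.
Qed.

Lemma unifies_comp r th e : wf_subst r -> wf_subst th -> fully_applied_eqn e ->
  unifies (Defs.comp r th) e <-> unifies th (app_eq r e).
Proof.
  intros Hr Hth. destruct e as [G l u]. intros [Hl Hu]. simpl.
  rewrite !app_sub_comp_wf by assumption. tauto.
Qed.

Lemma app_eq_id_on r e :
  fully_applied_eqn e -> (forall X, In X (fv_eqn e) -> r X = eps X) -> app_eq r e = e.
Proof.
  destruct e as [G l u]. intros [Hl Hu] Hr. simpl in *.
  rewrite !app_sub_id_on; auto; intros X HX; apply Hr, in_app_iff; auto.
Qed.

Lemma fresh_not_in_eqn H P Q s e : fresh H (P ++ Q) s -> In e P -> ~ In H (fv_eqn e).
Proof.
  intros [Hfr _] He HH. apply Hfr. unfold fv_prob. apply in_flat_map.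
  exists e. rewrite in_app_iff. auto.
Qed.

Lemma wt_fully_applied G t T : wt G t T -> fully_applied t.
Proof.
  revert G T; induction t as [a u IHu|h ts IHts|F xs] using tm_nested_ind; intros G T Hwt; inversion Hwt; subst; constructor.
  - eauto.
  - eapply Forall2_Forall_l; [eassumption|]. eapply Forall_impl; [|exact IHts]. eauto.
  - eapply Forall2_Forall_l; [eassumption|]. eapply Forall_impl; [|exact IHts]. eauto.
  - eapply Forall2_length. eassumption.
Qed.

(** * Similarity degrees *)

Local Open Scope R_scope.

Ltac rmin_lra := unfold Rmin in *; repeat destruct Rle_dec; lra.

Section Similarity.
Variable RA : const -> const -> R.
Hypothesis HRA : similarity RA.

Fixpoint Rt_list (ts ss : list tm) : R :=
  match ts, ss with
  | [], [] => 1
  | t :: ts', s :: ss' => Rmin (Rt RA t s) (Rt_list ts' ss')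
  | _, _ => 0
  end.

Lemma Rt_rig h g ts ss : Rt RA (Rig h ts) (Rig g ss) = Rmin (Rh RA h g) (Rt_list ts ss).
Proof. reflexivity. Qed.

Lemma Rh_bounds h g : 0 <= Rh RA h g <= 1.
Proof.
  destruct HRA as [Hbnd _]. destruct h as [i|c], g as [j|e]; simpl; try lra.
  - destruct (Nat.eqb i j); lra.
  - apply Hbnd.
Qed.

Lemma Rt_bounds t s : 0 <= Rt RA t s <= 1.
Proof.
  revert s; induction t as [a u IHu|h ts IHts|F xs] using tm_nested_ind; intros s; destruct s; try (simpl; lra).
  - simpl. destruct (ty_eq_dec a a0); auto; lra.
  - rewrite Rt_rig. assert (0 <= Rt_list ts ts0 <= 1).
    { revert ts0. induction IHts as [|t ts Ht _ IH]; intros [|s ss]; simpl; try lra.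
      specialize (IH ss). specialize (Ht s). rmin_lra. }
    pose proof (Rh_bounds h h0). rmin_lra.
  - simpl. destruct fvar_eq_dec; [destruct list_eq_dec|]; lra.
Qed.

Lemma Rt_refl t : Rt RA t t = 1.
Proof.
  destruct HRA as [_ [Hrefl _]].
  induction t as [a u IHu|h ts IHts|F xs] using tm_nested_ind; simpl.
  - destruct (ty_eq_dec a a); congruence.
  - assert (Hh : Rh RA h h = 1).
    { destruct h as [i|c]; simpl; [now rewrite Nat.eqb_refl|apply Hrefl]. }
    assert (Hts : Rt_list ts ts = 1).
    { induction IHts as [|t ts Ht _ IH]; simpl; auto. rewrite Ht, IH. rmin_lra. }
    change (Rmin (Rh RA h h) (Rt_list ts ts) = 1). rewrite Hh, Hts. rmin_lra.
  - destruct fvar_eq_dec; [destruct list_eq_dec|]; congruence.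
Qed.

Lemma Rt_sym t s : Rt RA t s = Rt RA s t.
Proof.
  destruct HRA as [_ [_ [Hsym _]]].
  revert s; induction t as [a u IHu|h ts IHts|F xs] using tm_nested_ind; intros s; destruct s; try reflexivity.
  - simpl. destruct (ty_eq_dec a a0), (ty_eq_dec a0 a); subst; auto; congruence.
  - rewrite !Rt_rig. f_equal.
    + destruct h, h0; simpl; auto. now rewrite Nat.eqb_sym.
    + revert ts0. induction IHts as [|t ts Ht _ IH]; intros [|s ss]; simpl; auto.
      now rewrite Ht, IH.
  - simpl. destruct (fvar_eq_dec F F0), (fvar_eq_dec F0 F); subst; try congruence.
    destruct (list_eq_dec Nat.eq_dec xs xs0), (list_eq_dec Nat.eq_dec xs0 xs); subst; congruence.
Qed.

Definition eqn_degree (th : subst) (e : eqn) : R :=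
  match e with Eqn _ l r => Rt RA (app_sub th l) (app_sub th r) end.

Fixpoint prob_degree (th : subst) (P : list eqn) : R :=
  match P with [] => 1 | e :: P' => Rmin (eqn_degree th e) (prob_degree th P') end.

Lemma prob_degree_bounds th P : 0 <= prob_degree th P <= 1.
Proof.
  induction P as [|[G l r] P IH]; simpl; [lra|].
  pose proof (Rt_bounds (app_sub th l) (app_sub th r)). rmin_lra.
Qed.

Lemma prob_degree_le_mem th P e : In e P -> prob_degree th P <= eqn_degree th e.
Proof.
  induction P as [|e' P IH]; intros He; simpl in *; [tauto|].
  destruct He as [<-|He]; [apply Rmin_l|].
  eapply Rle_trans; [apply Rmin_r|auto].
Qed.

Lemma prob_degree_incl th P Q : incl P Q -> prob_degree th Q <= prob_degree th P.
Proof.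
  induction P as [|e P IH]; intros HPQ; simpl; [apply prob_degree_bounds|].
  apply Rmin_glb.
  - apply prob_degree_le_mem, HPQ. left; reflexivity.
  - apply IH. intros x Hx. apply HPQ. right; exact Hx.
Qed.

Lemma prob_degree_same th P Q : (forall e, In e P <-> In e Q) -> prob_degree th P = prob_degree th Q.
Proof.
  intros HPQ. apply Rle_antisym; apply prob_degree_incl; intros e He; apply HPQ; exact He.
Qed.

Lemma prob_degree_app th P Q : prob_degree th (P ++ Q) = Rmin (prob_degree th P) (prob_degree th Q).
Proof.
  induction P as [|e P IH]; simpl.
  - pose proof (prob_degree_bounds th Q). rmin_lra.
  - rewrite IH, Rmin_assoc. reflexivity.
Qed.

Lemma prob_degree_select th P1 e P2 :
  prob_degree th (P1 ++ e :: P2) = Rmin (eqn_degree th e) (prob_degree th (P1 ++ P2)).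
Proof.
  change (Rmin (eqn_degree th e) (prob_degree th (P1 ++ P2))) with (prob_degree th (e :: P1 ++ P2)).
  apply prob_degree_same. intros x. rewrite !in_app_iff. simpl. rewrite in_app_iff. tauto.
Qed.

Lemma Rt_list_prob_degree th G ts ss : length ts = length ss ->
  Rt_list (map (app_sub th) ts) (map (app_sub th) ss) =
  prob_degree th (map (fun p => Eqn G (fst p) (snd p)) (combine ts ss)).
Proof.
  revert ss; induction ts as [|t ts IH]; intros [|s ss] Hl; simpl in *; try lia; auto.
  f_equal. apply IH. lia.
Qed.

End Similarity.

(** * Soundness of VarElim *)

Local Open Scope nat_scope.

(* (VE1) does not apply its binding to the rest of the problem; this is sound
   because the left-hand variable of each equation occurs nowhere else. *)
Definition private_lhs (P : list eqn) (e : eqn) : Prop :=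
  match e with Eqn _ l r =>
    exists H, fv l = [H] /\ ~ In H (fv r) /\
      forall e', In e' P -> In H (fv_eqn e') -> e' = e
  end.

(* Under the binder [lambda x_1 .. x_n] the bound variable [x_j] has de Bruijn
   index [length xs - 1 - j]. *)
Definition ve1_head (G : list ty) (xs : list nat) (a a' : rhead) (Ta : ty) : Prop :=
  (exists c, a = Cn c /\ a' = Cn c /\ Ta = c_ty c) \/
  (exists i j, a = Bv i /\ nth_error xs j = Some i /\
               a' = Bv (length xs - 1 - j) /\ nth_error G i = Some Ta).

Lemma ve1_head_scoped G xs a a' Ta us :
  ve1_head G xs a a' Ta -> Forall (scoped (length xs)) us -> scoped (length xs) (Rig a' us).
Proof.
  intros [[c [_ [-> _]]]|[i [j [_ [Hj [-> _]]]]]] Hus; constructor; auto.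
  assert (j < length xs) by (apply nth_error_Some; congruence). lia.
Qed.

Lemma ve1_head_rename G xs a a' Ta us :
  ve1_head G xs a a' Ta -> rename (inst_ren xs) (Rig a' us) = Rig a (map (rename (inst_ren xs)) us).
Proof.
  intros [[c [-> [-> _]]]|[i [j [-> [Hj [-> _]]]]]]; simpl; auto.
  assert (j < length xs) by (apply nth_error_Some; congruence).
  rewrite inst_ren_rev_index by assumption. erewrite nth_error_nth; eauto.
Qed.

Lemma arity_le_arrows_Forall2 F Hs Tis :
  Forall2 (fun H Ti => fv_ty H = arrows (ty_args (fv_ty F)) Ti) Hs Tis ->
  forall H, In H Hs -> arity F <= arity H.
Proof.
  induction 1 as [|H Ti Hs Tis HTi _ IH]; intros H' HH'; [contradiction|].
  destruct HH' as [<-|HH']; auto.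
  unfold arity. rewrite HTi, ty_args_arrows, length_app. lia.
Qed.

Section VE1Binding.
Variables (G : list ty) (F : fvar) (xs : list nat) (a a' : rhead) (Ta : ty) (Hs : list fvar).
Hypothesis Harity : length xs = arity F.
Hypothesis Hhead : ve1_head G xs a a' Ta.
Hypothesis HHs : forall H, In H Hs -> length xs <= arity H.

Definition ve1_binding : tm :=
  lams (ty_args (fv_ty F)) (Rig a' (map (fun H => long_app H (rev (seq 0 (length xs)))) Hs)).

Lemma wf_ve1_binding : wf_binding F ve1_binding.
Proof.
  assert (Hx : length (ty_args (fv_ty F)) = length xs) by exact (eq_sym Harity).
  apply wf_binding_lams; [unfold arity; lia|rewrite Hx|].
  - apply (ve1_head_scoped G _ a _ Ta); auto. apply Forall_forall. intros u Hu.
    apply in_map_iff in Hu. destruct Hu as [H [<- HH]].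
    apply scoped_long_app; [rewrite length_rev, length_seq; auto|].
    apply Forall_forall. intros z Hz. apply in_rev, in_seq in Hz. lia.
  - constructor. apply Forall_forall. intros u Hu.
    apply in_map_iff in Hu. destruct Hu as [H [<- HH]].
    apply fully_applied_long_app. rewrite length_rev, length_seq. auto.
Qed.

Lemma inst_ve1_binding : inst ve1_binding xs = Rig a (map (fun H => long_app H xs) Hs).
Proof.
  unfold ve1_binding. rewrite inst_lams by exact Harity.
  rewrite (ve1_head_rename G _ _ _ Ta) by exact Hhead. f_equal.
  rewrite map_map. apply map_ext_in. intros H HH. apply rename_long_app, HHs, HH.
Qed.

End VE1Binding.

Lemma index_of_spec z xs : In z xs -> index_of z xs < length xs /\ nth (index_of z xs) xs 0 = z.
Proof.
  induction xs as [|x xs IH]; simpl; intros Hz; [contradiction|].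
  destruct (Nat.eqb_spec z x) as [->|Hne]; [split; [lia|reflexivity]|].
  destruct Hz as [->|Hz]; [contradiction|]. destruct (IH Hz). split; [lia|assumption].
Qed.

Lemma common_In z xs ys : In z (common xs ys) -> In z xs /\ In z ys.
Proof.
  unfold common. rewrite filter_In, existsb_exists. intros [Hz [y [Hy Heq]]].
  apply Nat.eqb_eq in Heq. subst. auto.
Qed.

Definition ve2_binding (X : fvar) (xs : list nat) (H : fvar) (cs : list nat) : tm :=
  lams (ty_args (fv_ty X)) (Flex H (map (fun z => length xs - 1 - index_of z xs) cs)).

Section VE2Binding.
Variables (X : fvar) (xs : list nat) (H : fvar) (cs : list nat).
Hypothesis Hxs : length xs = arity X.
Hypothesis Hcs : forall z, In z cs -> In z xs.
Hypothesis HH : length cs = arity H.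

Lemma wf_ve2_binding : wf_binding X (ve2_binding X xs H cs).
Proof.
  apply wf_binding_lams; [unfold arity; lia| |].
  - constructor. apply Forall_forall. intros y Hy.
    apply in_map_iff in Hy. destruct Hy as [z [<- Hz]].
    destruct (index_of_spec z xs (Hcs z Hz)). unfold arity in Hxs. lia.
  - constructor. rewrite length_map. exact HH.
Qed.

Lemma inst_ve2_binding : inst (ve2_binding X xs H cs) xs = Flex H cs.
Proof.
  unfold ve2_binding. rewrite inst_lams by exact Hxs. simpl. f_equal.
  rewrite map_map. rewrite <- map_id. apply map_ext_in. intros z Hz.
  destruct (index_of_spec z xs (Hcs z Hz)) as [Hlt Hnth].
  rewrite inst_ren_rev_index; assumption.
Qed.

End VE2Binding.

Section VarElimSoundness.
Variables l0 r0 : tm.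
Hypothesis Hl0 : fully_applied l0.
Hypothesis Hr0 : fully_applied r0.

Definition ve_sound (P : list eqn) (phi : subst) : Prop :=
  forall th, wf_subst th -> unifies_all th P ->
    app_sub th (app_sub phi l0) = app_sub th (app_sub phi r0).

Record ve_inv (P : list eqn) (phi : subst) : Prop := {
  ve_nodup : NoDup P;
  ve_applied : forall e, In e P -> fully_applied_eqn e;
  ve_private : forall e, In e P -> private_lhs P e;
  ve_wf : wf_subst phi;
  ve_soundness : ve_sound P phi }.

Lemma ve_sound_step P phi rho P' :
  wf_subst phi -> wf_subst rho -> (forall e, In e P -> fully_applied_eqn e) ->
  (forall th, wf_subst th -> unifies_all th P' -> forall e, In e P -> unifies th (app_eq rho e)) ->
  ve_sound P phi -> ve_sound P' (Defs.comp phi rho).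
Proof.
  intros Hphi Hrho HP Hstep Hsound th Hth Hu.
  rewrite !app_sub_comp_assoc by auto.
  apply Hsound; [apply wf_subst_comp; auto|].
  intros e He. apply unifies_comp; auto.
Qed.

Lemma private_select_flex P1 P2 G F xs u :
  NoDup (P1 ++ Eqn G (Flex F xs) u :: P2) ->
  private_lhs (P1 ++ Eqn G (Flex F xs) u :: P2) (Eqn G (Flex F xs) u) ->
  ~ In F (fv u) /\ forall x, In x (P1 ++ P2) -> ~ In F (fv_eqn x).
Proof.
  intros Hnd [H [HF [Hu Honly]]]. simpl in HF. injection HF as <-. split; [exact Hu|].
  intros x Hx HFx. apply (NoDup_remove_2 _ _ _ Hnd).
  rewrite <- (Honly x); [exact Hx|apply in_select; auto|exact HFx].
Qed.

Lemma ve_inv_abs P1 P2 G a t s phi P' :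
  same_set P' (Eqn (a :: G) t s :: P1 ++ P2) ->
  ve_inv (P1 ++ Eqn G (Lam a t) (Lam a s) :: P2) phi -> ve_inv P' phi.
Proof.
  intros [Hnd' HE] Hinv. destruct Hinv as [Hnd Happ Hpriv Hwf Hsound].
  set (e0 := Eqn G (Lam a t) (Lam a s)) in *.
  set (e1 := Eqn (a :: G) t s).
  assert (Hnot : ~ In e0 (P1 ++ P2)) by exact (NoDup_remove_2 _ _ _ Hnd).
  assert (He0 : In e0 (P1 ++ e0 :: P2)) by (apply in_select; auto).
  assert (Hrest : forall x, In x (P1 ++ P2) -> In x (P1 ++ e0 :: P2))
    by (intros x Hx; apply in_select; auto).
  assert (Hsame : fv_eqn e1 = fv_eqn e0) by reflexivity.
  split; [exact Hnd'| | |exact Hwf|].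
  - intros x Hx. apply HE in Hx. destruct Hx as [<-|Hx]; [|apply Happ, Hrest, Hx].
    destruct (Happ e0 He0) as [Ht Hs]. inversion Ht. inversion Hs. split; assumption.
  - intros x Hx. apply HE in Hx. destruct Hx as [<-|Hx].
    + destruct (Hpriv e0 He0) as [H [Hl [Hr Honly]]]. exists H.
      split; [exact Hl|split; [exact Hr|]].
      intros e' He' Hin. apply HE in He'. destruct He' as [<-|He']; [reflexivity|].
      exfalso. apply Hnot. rewrite <- (Honly e' (Hrest e' He') Hin). exact He'.
    + pose proof (Hpriv x (Hrest x Hx)) as Hpx. destruct x as [Gx lx rx].
      destruct Hpx as [H [Hl [Hr Honly]]]. exists H. split; [exact Hl|split; [exact Hr|]].
      intros e' He' Hin. apply HE in He'. destruct He' as [<-|He']; [|exact (Honly e' (Hrest e' He') Hin)].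
      exfalso. apply Hnot. rewrite (Honly e0 He0); [exact Hx|]. rewrite <- Hsame. exact Hin.
  - intros th Hth Hu. apply Hsound; [exact Hth|].
    intros x Hx. apply in_select in Hx. destruct Hx as [->|Hx]; [|apply Hu, HE; right; exact Hx].
    simpl. f_equal. apply (Hu e1), HE. left; reflexivity.
Qed.

Section VE1Step.
Variables (Pout : list eqn) (sout : subst) (P1 P2 : list eqn) (G : list ty) (F : fvar)
  (xs : list nat) (a a' : rhead) (ss : list tm) (phi : subst) (Ta : ty) (Hs : list fvar)
  (P' : list eqn).
Let e0 := Eqn G (Flex F xs) (Rig a ss).
Let new := map (fun p => Eqn G (long_app (fst p) xs) (snd p)) (combine Hs ss).
Hypothesis Hhead : ve1_head G xs a a' Ta.
Hypothesis Htys : Forall2 (fun H Ti => fv_ty H = arrows (ty_args (fv_ty F)) Ti) Hs (ty_args Ta).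
Hypothesis Hlen : length Hs = length ss.
Hypothesis HndHs : NoDup Hs.
Hypothesis Hfresh : Forall (fun H => fresh H ((P1 ++ e0 :: P2) ++ Pout) phi /\ fresh H [] sout) Hs.
Hypothesis HP' : same_set P' (new ++ P1 ++ P2).
Hypothesis Hinv : ve_inv (P1 ++ e0 :: P2) phi.

Let Hnd := ve_nodup _ _ Hinv.
Let Happ := ve_applied _ _ Hinv.

Lemma ve1_e0_in : In e0 (P1 ++ e0 :: P2).
Proof. apply in_select. auto. Qed.

Lemma ve1_rest_in x : In x (P1 ++ P2) -> In x (P1 ++ e0 :: P2).
Proof. intros Hx. apply in_select. auto. Qed.

Lemma ve1_arity : length xs = arity F.
Proof. destruct (Happ e0 ve1_e0_in) as [HF _]. inversion HF. assumption. Qed.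

Lemma ve1_Hs_arity H : In H Hs -> length xs <= arity H.
Proof. rewrite ve1_arity. exact (arity_le_arrows_Forall2 F Hs (ty_args Ta) Htys H). Qed.

Lemma ve1_fresh H x : In H Hs -> In x (P1 ++ e0 :: P2) -> ~ In H (fv_eqn x).
Proof.
  intros HH Hx. rewrite Forall_forall in Hfresh. destruct (Hfresh H HH) as [Hf _].
  eapply fresh_not_in_eqn; eauto.
Qed.

Lemma in_ve1_problem x :
  In x P' <-> (exists H s, In (H, s) (combine Hs ss) /\ x = Eqn G (long_app H xs) s) \/ In x (P1 ++ P2).
Proof.
  destruct HP' as [_ HE]. rewrite HE, in_app_iff. unfold new. rewrite in_map_iff.
  split; intros [Hx|Hx]; auto; left.
  - destruct Hx as [[H s] [<- Hp]]. eauto.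
  - destruct Hx as [H [s [Hp ->]]]. exists (H, s). auto.
Qed.
Lemma ve1_arg_fv s X : In s ss -> In X (fv s) -> In X (fv_eqn e0).
Proof. intros Hs' HX. simpl. right. apply in_flat_map. eauto. Qed.

Lemma ve1_applied x : In x P' -> fully_applied_eqn x.
Proof.
  rewrite in_ve1_problem. intros [[H [s [Hp ->]]]|Hx]; [|apply Happ, ve1_rest_in, Hx].
  destruct (Happ e0 ve1_e0_in) as [_ Hrig]. inversion Hrig as [|? ? Hss|]; subst.
  split.
  - apply fully_applied_long_app, ve1_Hs_arity. eapply in_combine_l; eauto.
  - rewrite Forall_forall in Hss. apply Hss. eapply in_combine_r; eauto.
Qed.

Lemma ve1_private x : In x P' -> private_lhs P' x.
Proof.
  assert (Hnot : ~ In e0 (P1 ++ P2)) by exact (NoDup_remove_2 _ _ _ Hnd).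
  rewrite in_ve1_problem. intros [[H [s [Hp ->]]]|Hx].
  - assert (HH : In H Hs) by (eapply in_combine_l; eauto).
    exists H. rewrite fv_long_app. split; [reflexivity|split].
    + intros Hin. apply (ve1_fresh H e0 HH ve1_e0_in).
      apply (ve1_arg_fv s); [eapply in_combine_r; eauto|exact Hin].
    + intros e' He' Hin. apply in_ve1_problem in He'.
      destruct He' as [[H2 [s2 [Hp2 ->]]]|He'].
      * simpl in Hin. rewrite fv_long_app in Hin. destruct Hin as [->|Hin].
        -- now rewrite (combine_functional Hs ss H s s2 HndHs Hp Hp2).
        -- exfalso. apply (ve1_fresh H e0 HH ve1_e0_in).
           apply (ve1_arg_fv s2); [eapply in_combine_r; eauto|exact Hin].
      * exfalso. exact (ve1_fresh H e' HH (ve1_rest_in e' He') Hin).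
  - pose proof (ve_private _ _ Hinv x (ve1_rest_in x Hx)) as Hpx.
    destruct x as [Gx lx rx]. destruct Hpx as [H [Hl [Hr Honly]]].
    exists H. split; [exact Hl|split; [exact Hr|]].
    intros e' He' Hin. apply in_ve1_problem in He'.
    destruct He' as [[H2 [s2 [Hp2 ->]]]|He']; [exfalso|exact (Honly e' (ve1_rest_in e' He') Hin)].
    simpl in Hin. rewrite fv_long_app in Hin. destruct Hin as [->|Hin].
    + apply (ve1_fresh H (Eqn Gx lx rx) (in_combine_l _ _ _ _ Hp2) (ve1_rest_in _ Hx)).
      simpl. rewrite Hl. left; reflexivity.
    + apply Hnot. rewrite (Honly e0 ve1_e0_in); [exact Hx|].
      apply (ve1_arg_fv s2); [eapply in_combine_r; eauto|exact Hin].
Qed.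
Lemma ve1_wf_binding : wf_subst (bind1 F (ve1_binding F xs a' Hs)).
Proof. apply wf_subst_bind1, (wf_ve1_binding G F xs a a' Ta Hs ve1_arity Hhead ve1_Hs_arity). Qed.

Lemma ve1_sound : ve_sound P' (Defs.comp phi (bind1 F (ve1_binding F xs a' Hs))).
Proof.
  set (rho := bind1 F (ve1_binding F xs a' Hs)).
  destruct (private_select_flex P1 P2 G F xs (Rig a ss) Hnd (ve_private _ _ Hinv e0 ve1_e0_in))
    as [HFss HFrest].
  apply ve_sound_step with (P := P1 ++ e0 :: P2); try apply Hinv.
  - exact ve1_wf_binding.
  - intros th Hth Hu e He. apply in_select in He. destruct He as [->|He].
    + destruct (Happ e0 ve1_e0_in) as [_ Hrig].
      change (app_sub th (inst (rho F) xs) = app_sub th (app_sub rho (Rig a ss))).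
      rewrite (app_sub_id_on (Rig a ss) rho Hrig)
        by (intros X HX; apply bind1_other; intros ->; exact (HFss HX)).
      unfold rho. rewrite bind1_self, (inst_ve1_binding G F xs a a' Ta Hs ve1_arity Hhead ve1_Hs_arity).
      simpl. f_equal. rewrite map_map. apply map_eq_combine; [exact Hlen|].
      intros H s Hp. apply (Hu (Eqn G (long_app H xs) s)), in_ve1_problem. eauto.
    + rewrite app_eq_id_on.
      * apply Hu, in_ve1_problem. auto.
      * apply Happ, ve1_rest_in, He.
      * intros X HX. apply bind1_other. intros ->. exact (HFrest e He HX).
Qed.
Lemma ve_inv_ve1 : ve_inv P' (Defs.comp phi (bind1 F (ve1_binding F xs a' Hs))).
Proof.
  split; [apply HP'|exact ve1_applied|exact ve1_private| |exact ve1_sound].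
  apply wf_subst_comp; [apply Hinv|exact ve1_wf_binding].
Qed.

End VE1Step.

Section VE2Step.
Variables (Pout : list eqn) (P1 P2 : list eqn) (G : list ty) (F : fvar) (xs : list nat)
  (Gv : fvar) (ys : list nat) (phi : subst) (H : fvar) (P' : list eqn).
Let e0 := Eqn G (Flex F xs) (Flex Gv ys).
Let rho := ve2_subst F xs Gv ys H.
Hypothesis HTy : fv_ty H = arrows (map (fun z => nth (index_of z xs) (ty_args (fv_ty F)) (Defs.Base 0))
                                        (common xs ys)) (Defs.Base (ty_res (fv_ty F))).
Hypothesis Hfresh : fresh H ((P1 ++ e0 :: P2) ++ Pout) phi.
Hypothesis HP' : same_set P' (map (app_eq rho) (P1 ++ P2)).
Hypothesis Hinv : ve_inv (P1 ++ e0 :: P2) phi.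

Let Hnd := ve_nodup _ _ Hinv.
Let Happ := ve_applied _ _ Hinv.

Lemma ve2_e0_in : In e0 (P1 ++ e0 :: P2).
Proof. apply in_select. auto. Qed.

Lemma ve2_rest_in x : In x (P1 ++ P2) -> In x (P1 ++ e0 :: P2).
Proof. intros Hx. apply in_select. auto. Qed.

Lemma ve2_private_F : F <> Gv /\ forall x, In x (P1 ++ P2) -> ~ In F (fv_eqn x).
Proof.
  destruct (private_select_flex P1 P2 G F xs (Flex Gv ys) Hnd (ve_private _ _ Hinv e0 ve2_e0_in))
    as [HFG HFrest].
  split; [intros ->; apply HFG; left; reflexivity|exact HFrest].
Qed.

Lemma ve2_common_arity : length (common xs ys) = arity H.
Proof. unfold arity. rewrite HTy, ty_args_arrows, app_nil_r, length_map. reflexivity. Qed.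

Lemma ve2_rho_F : rho F = ve2_binding F xs H (common xs ys).
Proof. unfold rho, ve2_subst. apply bind2_fst. Qed.

Lemma ve2_rho_Gv : rho Gv = ve2_binding Gv ys H (common xs ys).
Proof. unfold rho, ve2_subst. apply bind2_snd, ve2_private_F. Qed.

Lemma ve2_inst_lhs : inst (rho F) xs = Flex H (common xs ys).
Proof.
  destruct (Happ e0 ve2_e0_in) as [HF _]. inversion HF.
  rewrite ve2_rho_F. apply inst_ve2_binding; [assumption|].
  intros z Hz. apply common_In in Hz. apply Hz.
Qed.
Lemma ve2_inst_rhs : inst (rho Gv) ys = Flex H (common xs ys).
Proof.
  destruct (Happ e0 ve2_e0_in) as [_ HG]. inversion HG.
  rewrite ve2_rho_Gv. apply inst_ve2_binding; [assumption|].
  intros z Hz. apply common_In in Hz. apply Hz.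
Qed.

Lemma ve2_wf_rho : wf_subst rho.
Proof.
  destruct (Happ e0 ve2_e0_in) as [HF HG]. inversion HF. inversion HG.
  apply wf_subst_bind2; apply wf_ve2_binding; auto using ve2_common_arity;
    intros z Hz; apply common_In in Hz; apply Hz.
Qed.

Lemma ve2_fv_rho X Y : In X (fv (rho Y)) -> X = H \/ X = Y.
Proof.
  destruct (fvar_eq_dec Y F) as [->|HYF]; [rewrite ve2_rho_F|].
  { unfold ve2_binding. rewrite fv_lams. simpl. intuition. }
  destruct (fvar_eq_dec Y Gv) as [->|HYG]; [rewrite ve2_rho_Gv|].
  { unfold ve2_binding. rewrite fv_lams. simpl. intuition. }
  unfold rho, ve2_subst. rewrite bind2_other by assumption.
  unfold eps. rewrite eta_unfold, fv_lams. simpl. intuition.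
Qed.

Lemma ve2_fv_app_eq X x : In X (fv_eqn (app_eq rho x)) -> X = H \/ In X (fv_eqn x).
Proof.
  destruct x as [Gx l r]. simpl. rewrite !in_app_iff.
  intros [HX|HX]; apply in_fv_app_sub in HX; destruct HX as [Y [HY HXY]];
    destruct (ve2_fv_rho X Y HXY) as [-> | ->]; auto.
Qed.

Lemma in_ve2_problem x : In x P' <-> exists x0, In x0 (P1 ++ P2) /\ x = app_eq rho x0.
Proof.
  destruct HP' as [_ HE]. rewrite HE, in_map_iff.
  split; intros [x0 [Hx Hx0]]; eauto.
Qed.

Lemma ve2_applied x : In x P' -> fully_applied_eqn x.
Proof.
  rewrite in_ve2_problem. intros [x0 [Hx0 ->]].
  apply fully_applied_app_eq; [exact ve2_wf_rho|apply Happ, ve2_rest_in, Hx0].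
Qed.

Lemma ve2_private x : In x P' -> private_lhs P' x.
Proof.
  assert (Hnot : ~ In e0 (P1 ++ P2)) by exact (NoDup_remove_2 _ _ _ Hnd).
  rewrite in_ve2_problem. intros [x1 [Hx1 ->]].
  pose proof (ve_private _ _ Hinv x1 (ve2_rest_in x1 Hx1)) as Hpx.
  pose proof (Happ x1 (ve2_rest_in x1 Hx1)) as Hax.
  pose proof (proj2 ve2_private_F x1 Hx1) as HFx.
  destruct x1 as [G1 l1 r1]. destruct Hpx as [H1 [Hl1 [Hr1 Honly]]].
  assert (HH1 : In H1 (fv_eqn (Eqn G1 l1 r1))) by (simpl; rewrite Hl1; left; reflexivity).
  assert (N1 : H1 <> F) by (intros ->; exact (HFx HH1)).
  assert (N2 : H1 <> Gv).
  { intros ->. apply Hnot. rewrite (Honly e0 ve2_e0_in); [exact Hx1|right; left; reflexivity]. }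
  assert (N3 : H1 <> H).
  { intros ->. exact (fresh_not_in_eqn H _ _ _ _ Hfresh (ve2_rest_in _ Hx1) HH1). }
  assert (L1 : app_sub rho l1 = l1).
  { apply app_sub_id_on; [apply Hax|]. rewrite Hl1. intros X [<-|[]].
    unfold rho, ve2_subst. apply bind2_other; assumption. }
  simpl. rewrite L1. exists H1. split; [exact Hl1|split].
  - intros HX. apply in_fv_app_sub in HX. destruct HX as [Y [HY HXY]].
    destruct (ve2_fv_rho H1 Y HXY) as [-> | ->]; [exact (N3 eq_refl)|exact (Hr1 HY)].
  - intros e'' He'' Hin. apply in_ve2_problem in He''. destruct He'' as [x2 [Hx2 ->]].
    destruct (ve2_fv_app_eq H1 x2 Hin) as [->|Hin2]; [contradiction|].
    rewrite (Honly x2 (ve2_rest_in x2 Hx2) Hin2). simpl. rewrite L1. reflexivity.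
Qed.

Lemma ve2_sound : ve_sound P' (Defs.comp phi rho).
Proof.
  apply ve_sound_step with (P := P1 ++ e0 :: P2); try apply Hinv; [exact ve2_wf_rho|].
  intros th Hth Hu e He. apply in_select in He. destruct He as [->|He].
  - change (app_sub th (inst (rho F) xs) = app_sub th (inst (rho Gv) ys)).
    rewrite ve2_inst_lhs, ve2_inst_rhs. reflexivity.
  - apply Hu, in_ve2_problem. eauto.
Qed.

Lemma ve_inv_ve2 : ve_inv P' (Defs.comp phi rho).
Proof.
  split; [apply HP'|exact ve2_applied|exact ve2_private| |exact ve2_sound].
  apply wf_subst_comp; [apply Hinv|exact ve2_wf_rho].
Qed.

End VE2Step.

Lemma ve_step_inv Pout sout c c' :
  ve_step Pout sout c c' -> ve_inv (fst c) (snd c) -> ve_inv (fst c') (snd c').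
Proof.
  destruct 1; simpl; intros Hinv.
  - eapply ve_inv_abs; eauto.
  - eapply ve_inv_ve1; eauto.
  - eapply ve_inv_ve2; eauto.
Qed.

End VarElimSoundness.

Theorem varelim_sound Pout sout G F xs u phi :
  length xs = arity F -> fully_applied u -> ~ In F (fv u) ->
  VarElim Pout sout G (Flex F xs) u phi ->
  wf_subst phi /\ app_sub phi (Flex F xs) = app_sub phi u.
Proof.
  intros Hxs Hu HFu Hve.
  assert (Hl : fully_applied (Flex F xs)) by (constructor; exact Hxs).
  assert (Hinit : ve_inv (Flex F xs) u [Eqn G (Flex F xs) u] eps).
  { split.
    - constructor; [intros []|constructor].
    - intros e [<-|[]]. split; assumption.
    - intros e [<-|[]]. exists F. split; [reflexivity|split; [exact HFu|]].
      intros e' [<-|[]] _. reflexivity.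
    - exact wf_subst_eps.
    - intros th Hth Hunif. rewrite !app_sub_eps by assumption.
      apply (Hunif (Eqn G (Flex F xs) u)). left; reflexivity. }
  destruct (star_invariant _ (fun c => ve_inv (Flex F xs) u (fst c) (snd c)) _ _
              (ve_step_inv _ _ Hl Hu Pout sout) Hve Hinit) as [_ _ _ Hwf Hsound].
  split; [exact Hwf|].
  specialize (Hsound eps wf_subst_eps (fun e He => False_ind _ He)).
  rewrite !app_sub_eps in Hsound by (apply fully_applied_app_sub; auto; intros X; apply Hwf).
  exact Hsound.
Qed.

(** * Soundness of HOPSU *)

Lemma agree_pos_lt xs ys j : In j (agree_pos xs ys) -> j < length xs.
Proof. unfold agree_pos. rewrite filter_In, in_seq. lia. Qed.

Lemma agree_pos_nth xs ys j : In j (agree_pos xs ys) -> nth j xs 0 = nth j ys 0.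
Proof. unfold agree_pos. rewrite filter_In, Nat.eqb_eq. tauto. Qed.

Section SVBinding.
Variables (F : fvar) (xs ys : list nat) (H : fvar).
Hypothesis Hxs : length xs = arity F.
Hypothesis Hys : length ys = length xs.

Lemma wf_sv_subst : length (agree_pos xs ys) = arity H -> wf_subst (sv_subst F xs ys H).
Proof.
  intros HH. apply wf_subst_bind1, wf_binding_lams; [unfold arity; lia| |].
  - constructor. apply Forall_forall. intros y Hy. apply in_map_iff in Hy.
    destruct Hy as [j [<- Hj]]. apply agree_pos_lt in Hj. unfold arity in Hxs. lia.
  - constructor. rewrite length_map. exact HH.
Qed.

Lemma sv_subst_unifies G : unifies (sv_subst F xs ys H) (Eqn G (Flex F xs) (Flex F ys)).
Proof.
  simpl. unfold sv_subst. rewrite bind1_self, !inst_lams by (unfold arity in Hxs; lia).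
  simpl. f_equal. rewrite !map_map. apply map_ext_in. intros j Hj.
  pose proof (agree_pos_lt _ _ _ Hj).
  rewrite inst_ren_rev_index, <- Hys, inst_ren_rev_index by lia.
  apply agree_pos_nth, Hj.
Qed.

End SVBinding.

Local Open Scope R_scope.

Section HOPSUSoundness.
Variable RA : const -> const -> R.
Hypothesis HRA : similarity RA.
Variable mu : R.
Variables t0 s0 : tm.
Hypothesis Ht0 : fully_applied t0.
Hypothesis Hs0 : fully_applied s0.

Record hopsu_inv (P : list eqn) (sigma : subst) (d : R) : Prop := {
  hopsu_applied : forall e, In e P -> fully_applied_eqn e;
  hopsu_wf : wf_subst sigma;
  hopsu_cut : mu <= d;
  hopsu_le1 : d <= 1;
  hopsu_degree : forall th, wf_subst th ->
    Rt RA (app_sub th (app_sub sigma t0)) (app_sub th (app_sub sigma s0)) =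
    Rmin d (prob_degree RA th P) }.

Lemma prob_degree_comp r th Q : wf_subst r -> wf_subst th ->
  (forall e, In e Q -> fully_applied_eqn e) ->
  prob_degree RA (Defs.comp r th) Q = prob_degree RA th (map (app_eq r) Q).
Proof.
  intros Hr Hth; induction Q as [|[G l u] Q IH]; intros HQ; simpl; [reflexivity|].
  destruct (HQ _ (or_introl eq_refl)) as [Hl Hu].
  rewrite !app_sub_comp_wf by assumption. f_equal. apply IH. intros e He. apply HQ. right; exact He.
Qed.

Lemma eqn_degree_unifier th e : unifies th e -> eqn_degree RA th e = 1.
Proof. destruct e as [G l u]. simpl. intros ->. apply Rt_refl, HRA. Qed.

Lemma hopsu_inv_solve P1 e P2 s d r P' :
  wf_subst r -> unifies r e -> same_set P' (map (app_eq r) (P1 ++ P2)) ->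
  hopsu_inv (P1 ++ e :: P2) s d -> hopsu_inv P' (Defs.comp s r) d.
Proof.
  intros Hr He [_ HP'] [Happ Hs Hmu Hd Hdeg].
  assert (Happ' : forall x, In x (P1 ++ P2) -> fully_applied_eqn x)
    by (intros x Hx; apply Happ, in_select; auto).
  split; [| apply wf_subst_comp; assumption | exact Hmu | exact Hd |].
  - intros x Hx. apply HP', in_map_iff in Hx. destruct Hx as [x0 [<- Hx0]].
    apply fully_applied_app_eq; auto.
  - intros th Hth. rewrite !app_sub_comp_assoc by assumption.
    rewrite Hdeg, (prob_degree_select RA HRA) by (apply wf_subst_comp; assumption).
    rewrite eqn_degree_unifier.
    2: { apply unifies_comp; auto; [apply Happ, in_select; auto|].
         destruct e as [G l u]. simpl in *. rewrite He. reflexivity. }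
    rewrite prob_degree_comp, (prob_degree_same RA HRA th P' _ HP') by assumption.
    pose proof (prob_degree_bounds RA HRA th (map (app_eq r) (P1 ++ P2))). rmin_lra.
Qed.

Lemma hopsu_inv_replace P1 e P2 e' s d P' :
  fully_applied_eqn e' -> (forall th, eqn_degree RA th e' = eqn_degree RA th e) ->
  same_set P' (e' :: P1 ++ P2) -> hopsu_inv (P1 ++ e :: P2) s d -> hopsu_inv P' s d.
Proof.
  intros He' Hdeg' [_ HP'] [Happ Hs Hmu Hd Hdeg].
  split; [| exact Hs | exact Hmu | exact Hd |].
  - intros x Hx. apply HP' in Hx. destruct Hx as [<-|Hx]; [exact He'|apply Happ, in_select; auto].
  - intros th Hth. rewrite Hdeg, (prob_degree_select RA HRA), (prob_degree_same RA HRA th P' _ HP')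
      by exact Hth.
    simpl. rewrite Hdeg'. reflexivity.
Qed.

Lemma hopsu_inv_dec P1 P2 G f g ts ss s d P' :
  length ts = length ss -> mu <= Rmin d (Rh RA f g) ->
  same_set P' (map (fun p => Eqn G (fst p) (snd p)) (combine ts ss) ++ P1 ++ P2) ->
  hopsu_inv (P1 ++ Eqn G (Rig f ts) (Rig g ss) :: P2) s d ->
  hopsu_inv P' s (Rmin d (Rh RA f g)).
Proof.
  intros Hlen Hmu' [_ HP'] [Happ Hs Hmu Hd Hdeg].
  destruct (Happ _ (proj2 (in_select _ _ _ _) (or_introl eq_refl))) as [Hts Hss].
  inversion Hts as [|? ? Hts'|]; inversion Hss as [|? ? Hss'|]; subst.
  split; [| exact Hs | exact Hmu' | pose proof (Rh_bounds RA HRA f g); rmin_lra |].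
  - intros x Hx. apply HP', in_app_iff in Hx.
    destruct Hx as [Hx|Hx]; [|apply Happ, in_select; auto].
    apply in_map_iff in Hx. destruct Hx as [[t u] [<- Htu]].
    rewrite Forall_forall in Hts', Hss'.
    split; [apply Hts'; eapply in_combine_l|apply Hss'; eapply in_combine_r]; eauto.
  - intros th Hth.
    rewrite Hdeg, (prob_degree_select RA HRA), (prob_degree_same RA HRA th P' _ HP') by exact Hth.
    change (eqn_degree RA th (Eqn G (Rig f ts) (Rig g ss))) with
      (Rt RA (Rig f (map (app_sub th) ts)) (Rig g (map (app_sub th) ss))).
    rewrite Rt_rig, (Rt_list_prob_degree RA th G) by exact Hlen.
    rewrite !(prob_degree_app RA HRA). rmin_lra.
Qed.

Lemma hopsu_inv_sv P1 P2 G F xs ys H s d P' :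
  length xs = length ys ->
  fv_ty H = arrows (map (fun j => nth j (ty_args (fv_ty F)) (Defs.Base 0)) (agree_pos xs ys))
                   (Defs.Base (ty_res (fv_ty F))) ->
  same_set P' (map (app_eq (sv_subst F xs ys H)) (P1 ++ P2)) ->
  hopsu_inv (P1 ++ Eqn G (Flex F xs) (Flex F ys) :: P2) s d ->
  hopsu_inv P' (Defs.comp s (sv_subst F xs ys H)) d.
Proof.
  intros Hlen HTy HP' Hinv.
  destruct (hopsu_applied _ _ _ Hinv _ (proj2 (in_select _ _ _ _) (or_introl eq_refl))) as [Hxs _].
  inversion Hxs as [| |? ? Harity]; subst.
  eapply hopsu_inv_solve with (e := Eqn G (Flex F xs) (Flex F ys)); eauto.
  - apply wf_sv_subst; auto.
    unfold arity. rewrite HTy, ty_args_arrows, app_nil_r, length_map. reflexivity.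
  - apply sv_subst_unifies; auto.
Qed.

Lemma hopsu_inv_lf P1 P2 G F xs u phi s d P' :
  fully_applied u -> ~ In F (fv u) ->
  VarElim (P1 ++ Eqn G (Flex F xs) u :: P2) s G (Flex F xs) u phi ->
  same_set P' (map (app_eq (restrict phi (F :: fv u))) (P1 ++ P2)) ->
  hopsu_inv (P1 ++ Eqn G (Flex F xs) u :: P2) s d ->
  hopsu_inv P' (Defs.comp s (restrict phi (F :: fv u))) d.
Proof.
  intros Hu HFu Hve HP' Hinv.
  destruct (hopsu_applied _ _ _ Hinv _ (proj2 (in_select _ _ _ _) (or_introl eq_refl))) as [Hxs _].
  inversion Hxs as [| |? ? Harity]; subst.
  destruct (varelim_sound _ _ _ _ _ _ _ Harity Hu HFu Hve) as [Hwf Hunif].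
  eapply hopsu_inv_solve with (e := Eqn G (Flex F xs) u); eauto.
  - apply wf_subst_restrict, Hwf.
  - unfold unifies. rewrite !app_sub_restrict; [exact Hunif| |]; intros X HX; simpl in *; auto.
    destruct HX as [<-|[]]. left; reflexivity.
Qed.

(* Failure is not a terminal configuration of interest, hence [True]. *)
Definition cfg_inv (c : cfg) : Prop :=
  match c with Cfg P s d => hopsu_inv P s d | Bot => True end.

Lemma hopsu_rule_inv P1 e P2 s d c :
  hrule RA mu P1 e P2 s d c -> hopsu_inv (P1 ++ e :: P2) s d -> cfg_inv c.
Proof.
  intros Hr Hinv. assert (He := hopsu_applied _ _ _ Hinv e (proj2 (in_select _ _ _ _) (or_introl eq_refl))).
  destruct Hr; subst e; simpl in He.
  - destruct He as [Ht Hu]. inversion Ht; inversion Hu; subst.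
    eapply hopsu_inv_replace with (e' := Eqn (a :: G) t u); [split; assumption| |eassumption|exact Hinv].
    intros th. simpl. destruct (ty_eq_dec a a); [reflexivity|contradiction].
  - eapply hopsu_inv_dec; eauto.
  - eapply hopsu_inv_sv; eauto.
  - eapply hopsu_inv_replace with (e' := Eqn G (Flex F xs) (Rig a ss));
      [destruct He; split; assumption| |eassumption|exact Hinv].
    intros th. apply Rt_sym, HRA.
  - eapply hopsu_inv_lf; eauto. apply He.
Qed.

Lemma hstep_inv c c' : hstep RA mu c c' -> cfg_inv c -> cfg_inv c'.
Proof.
  destruct 1 as [P1 e P2 s d c' Hr|]; simpl; [|trivial].
  apply hopsu_rule_inv, Hr.
Qed.

Lemma hopsu_inv_init : mu <= 1 -> hopsu_inv [Eqn [] t0 s0] eps 1.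
Proof.
  intros Hmu. split; [intros e [<-|[]]; split; assumption|exact wf_subst_eps|exact Hmu|lra|].
  intros th Hth. rewrite !app_sub_eps by assumption. simpl.
  pose proof (Rt_bounds RA HRA (app_sub th t0) (app_sub th s0)). rmin_lra.
Qed.

Lemma hopsu_inv_solved sigma d :
  hopsu_inv [] sigma d -> Rt RA (app_sub sigma t0) (app_sub sigma s0) = d.
Proof.
  intros [_ Hwf _ Hle1 Hdeg]. specialize (Hdeg eps wf_subst_eps). simpl in Hdeg.
  rewrite !app_sub_eps in Hdeg by (apply fully_applied_app_sub; auto; intros X; apply Hwf).
  rewrite Hdeg. rmin_lra.
Qed.

End HOPSUSoundness.

Theorem theorem3 (RA : const -> const -> R) (mu : R) (t s : tm) (T : ty)
    (sigma : subst) (d : R) :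
  similarity RA ->
  0 < mu <= 1 ->
  hopattern t T ->
  hopattern s T ->
  star (hstep RA mu) (hopsu_init t s) (Cfg [] sigma d) ->
  mu <= d /\ Rt RA (app_sub sigma t) (app_sub sigma s) = d.
Proof.
  intros HRA Hmu Ht Hs Hrun.
  apply wt_fully_applied in Ht. apply wt_fully_applied in Hs.
  pose proof (star_invariant _ (cfg_inv RA mu t s) _ _ (hstep_inv RA HRA mu t s Ht Hs) Hrun
                (hopsu_inv_init RA HRA mu t s Ht Hs (proj2 Hmu))) as Hfinal.
  split; [apply Hfinal|].
  exact (hopsu_inv_solved RA mu t s Ht Hs sigma d Hfinal).
Qed.
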